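(* In the setting below, assume $\|\nabla f_i(x)\|\le G_i$ for all $x$ and $i$, and run the method for all epochs $k\in\mathbb N$ with arbitrary permutations. Suppose (1) $\eta_k=r_k\tilde\eta_k$ for all $k\in\mathbb N$, where $r_k=r\vee\max_{\ell\in[k]}\|x_\ell-x_1\|$ for some $r>0$ and $(\tilde\eta_k)_{k\in\mathbb N}$ is a positive sequence; and (2) $\sum_{k=1}^\infty6\bar G^2n^2\tilde\eta_k^2\le c^2$ for some constant $0<c<1$. Then $$\|x_k-x_1\|\le\frac2{1-c}\|x_*-x_1\|+\frac c{1-c}r\quad\text{for all }k\in\mathbb N.$$
   Context: Setting. Let $n,d\in\mathbb N$, let $f_1,\dots,f_n:\mathbb R^d\to\mathbb R$ be convex, $f=\frac1n\sum_{i=1}^nf_i$, let $\psi:\mathbb R^d\to\mathbb R\cup\{+\infty\}$ be proper, closed and convex, and $F=f+\psi$. For a convex function $g$, $\nabla g(x)$ denotes an element of $\partial g(x)$ (for each $f_i$ a fixed selection of subgradients, the same one used in the algorithm). Assume there is $x_*\in\mathbb R^d$ with $F(x_* )=\inf_{x}F(x)\in\mathbb R$. Proximal shuffling gradient method: given $x_1\in\mathrm{dom}\,\psi$ and stepsizes $\eta_k>0$, for each epoch $k$: choose a permutation $\sigma_k=(\sigma_k^1,\dots,\sigma_k^n)$ of $[n]=\{1,\dots,n\}$; set $x_k^1=x_k$ and $x_k^{i+1}=x_k^i-\eta_k\nabla f_{\sigma_k^i}(x_k^i)$ for $i=1,\dots,n$; set $x_{k+1}=\arg\min_{x\in\mathbb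 R^d}\{n\psi(x)+\frac{1}{2\eta_k}\|x-x_k^{n+1}\|^2\}$. $a\vee b=\max\{a,b\}$. Lipschitz condition: constants $G_i>0$ with $\|\nabla f_i(x)\|\le G_i$ for all $x\in\mathbb R^d$, $i\in[n]$ (for every subgradient); $\bar G=\frac1n\sum_{i=1}^nG_i$. *)

From HB Require Import structures.
From mathcomp Require Import all_boot all_order all_algebra.
From mathcomp Require Import all_classical all_reals all_analysis.
From mathcomp Require Import perm.
Set Implicit Arguments. Unset Strict Implicit. Unset Printing Implicit Defensive.
Import Order.TTheory GRing.Theory Num.Theory.
Import numFieldNormedType.Exports.
Local Open Scope classical_set_scope.
Local Open Scope ring_scope.

Section Defs.
Variable R : realType.
Variable d : nat.
Notation vec := 'rV[R]_d.

Definition dotv (u v : vec) : R := \sum_(i < d) u 0 i * v 0 i.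
Definition enorm (v : vec) : R := Num.sqrt (dotv v v).

Definition convex_fun (h : vec -> R) : Prop :=
  forall (x y : vec) (t : R), 0 <= t <= 1 ->
    h (t *: x + (1 - t) *: y) <= t * h x + (1 - t) * h y.

Definition subgrad (h : vec -> R) (x g : vec) : Prop :=
  forall y : vec, h x + dotv g (y - x) <= h y.

Definition proper_fun (p : vec -> \bar R) : Prop :=
  (forall x, p x != -oo%E) /\ (exists x, (p x < +oo)%E).
Definition closed_fun (p : vec -> \bar R) : Prop :=
  forall t : R, closed [set x | (p x <= t%:E)%E].
Definition convex_efun (p : vec -> \bar R) : Prop :=
  forall (x y : vec) (t : R), 0 < t < 1 ->
    (p (t *: x + (1 - t) *: y)%R <= t%:E * p x + (1 - t)%R%:E * p y)%E.

Fixpoint inner_pass (n : nat) (g : 'I_n -> vec -> vec) (eta : R)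
    (s : seq 'I_n) (x : vec) : vec :=
  match s with
  | [::] => x
  | i :: s' => inner_pass g eta s' (x - eta *: g i x)
  end.

Definition prox_min (n : nat) (psi : vec -> \bar R) (eta : R) (v y : vec) : Prop :=
  forall z : vec,
    ((n%:R)%R%:E * psi y + (1 / (2 * eta) * enorm (y - v) ^+ 2)%R%:E
     <= (n%:R)%R%:E * psi z + (1 / (2 * eta) * enorm (z - v) ^+ 2)%R%:E)%E.

Definition rk (x : nat -> vec) (r : R) (k : nat) : R :=
  \big[Num.max/r]_(1 <= l < k.+1) enorm (x l - x 1%N).

Definition Fobj (n : nat) (f : 'I_n -> vec -> R) (psi : vec -> \bar R) (x : vec)
  : \bar R := ((n%:R)^-1 * \sum_(i < n) f i x)%R%:E + psi x.

End Defs.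

(* One epoch, the incremental pass followed by the proximal step, is almost
   nonexpansive towards the minimiser x*: the subgradient inequality along the
   pass, the three-point inequality of the prox and the optimality of x* give
   |x_{k+1} - x*|^2 <= |x_k - x*|^2 + 4 eta_k^2 (n Gbar)^2.  With
   eta_k = r_k etat_k and r_k nondecreasing, summing yields
   |x_{k+1} - x*| <= |x_1 - x*| + c r_k, hence
   |x_{k+1} - x_1| <= 2 |x* - x_1| + c r_k.  As c < 1, the bound
   (2 |x* - x_1| + c r) / (1 - c) on |x_l - x_1| then propagates through the
   running maximum r_k by induction. *)

From HB Require Import structures.
From mathcomp Require Import all_boot all_order all_algebra.
From mathcomp Require Import all_classical all_reals all_analysis.
From mathcomp Require Import perm.
From mathcomp Require Import ring lra.
Set Implicit Arguments. Unset Strict Implicit. Unset Printing Implicit Defensive.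
Import Order.TTheory GRing.Theory Num.Theory.
Local Open Scope ring_scope.

Section Euclidean.
Variables (R : realType) (d : nat).
Implicit Types (u v w : 'rV[R]_d) (t : R).

Lemma dotvC u v : dotv u v = dotv v u.
Proof. by apply: eq_bigr => i _; rewrite mulrC. Qed.

Lemma dotvDl u v w : dotv (u + v) w = dotv u w + dotv v w.
Proof. by rewrite /dotv -big_split; apply: eq_bigr => i _; rewrite mxE mulrDl. Qed.

Lemma dotvZl t u v : dotv (t *: u) v = t * dotv u v.
Proof. by rewrite /dotv mulr_sumr; apply: eq_bigr => i _; rewrite mxE mulrA. Qed.

Lemma dotvNl u v : dotv (- u) v = - dotv u v.
Proof. by rewrite -scaleN1r dotvZl mulN1r. Qed.

Lemma dotvBl u v w : dotv (u - v) w = dotv u w - dotv v w.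
Proof. by rewrite dotvDl dotvNl. Qed.

Lemma dotvZr t u v : dotv u (t *: v) = t * dotv u v.
Proof. by rewrite dotvC dotvZl dotvC. Qed.

Lemma dotvBr u v w : dotv u (v - w) = dotv u v - dotv u w.
Proof. by rewrite !(dotvC u) dotvBl. Qed.

Lemma dotv_ge0 u : 0 <= dotv u u.
Proof. by apply: sumr_ge0 => i _; rewrite -expr2 sqr_ge0. Qed.

Lemma dotv_eq0 u v : dotv u u = 0 -> dotv u v = 0.
Proof.
move=> /psumr_eq0P u0; rewrite /dotv big1 // => i _.
have /eqP : u 0 i * u 0 i = 0 by apply: u0 => // j _; rewrite -expr2 sqr_ge0.
by rewrite mulf_eq0 orbb => /eqP ->; rewrite mul0r.
Qed.

Lemma enorm_ge0 u : 0 <= enorm u.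
Proof. exact: sqrtr_ge0. Qed.

Lemma enorm_sqr u : enorm u ^+ 2 = dotv u u.
Proof. by rewrite sqr_sqrtr // dotv_ge0. Qed.

Lemma enormD_sqr u v :
  enorm (u + v) ^+ 2 = enorm u ^+ 2 + 2 * dotv u v + enorm v ^+ 2.
Proof. by rewrite !enorm_sqr dotvDl !(dotvC _ (u + v)) !dotvDl (dotvC u v); ring. Qed.

Lemma enormZ t u : enorm (t *: u) = `|t| * enorm u.
Proof. by rewrite /enorm dotvZl dotvZr mulrA -expr2 sqrtrM ?sqr_ge0 // sqrtr_sqr. Qed.

Lemma enormN u : enorm (- u) = enorm u.
Proof. by rewrite -scaleN1r enormZ normrN normr1 mul1r. Qed.

Lemma enorm_distC u v : enorm (u - v) = enorm (v - u).
Proof. by rewrite -enormN opprB. Qed.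

(* Expand [0 <= |(u.v) u - (u.u) v|^2]. *)
Lemma cauchy_schwarz u v : `|dotv u v| <= enorm u * enorm v.
Proof.
rewrite -ler_sqr ?nnegrE ?mulr_ge0 ?enorm_ge0 // real_normK ?num_real //.
rewrite exprMn !enorm_sqr.
have [uu0|uu_neq0] := eqVneq (dotv u u) 0; first by rewrite dotv_eq0 // uu0 expr0n mul0r.
have uu_gt0 : 0 < dotv u u by rewrite lt_def uu_neq0 dotv_ge0.
have := dotv_ge0 (dotv u v *: u - dotv u u *: v).
rewrite !(dotvBl, dotvBr, dotvZl, dotvZr) (dotvC v u) => h.
have : 0 <= dotv u u * (dotv u u * dotv v v - dotv u v ^+ 2) by lra.
by rewrite pmulr_rge0 // subr_ge0.
Qed.

Lemma ler_enormD u v : enorm (u + v) <= enorm u + enorm v.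
Proof.
rewrite -ler_sqr ?nnegrE ?addr_ge0 ?enorm_ge0 // enormD_sqr sqrrD.
have := ler_norm (dotv u v); have := cauchy_schwarz u v; lra.
Qed.

End Euclidean.

Section IncrementalPass.
Variables (R : realType) (n d : nat).
Variables (f : 'I_n -> 'rV[R]_d -> R) (g : 'I_n -> 'rV[R]_d -> 'rV[R]_d).
Variable G : 'I_n -> R.
Hypothesis hg : forall i x, subgrad (f i) x (g i x).
Hypothesis hG : forall i x v, subgrad (f i) x v -> enorm v <= G i.
Variable eta : R.
Hypothesis eta_ge0 : 0 <= eta.
Implicit Types (x y z : 'rV[R]_d) (s : seq 'I_n).

Lemma subgrad_bound_ge0 i : 0 <= G i.
Proof. exact: le_trans (enorm_ge0 _) (hG (hg i 0)). Qed.

Lemma subgrad_lipschitz i x y : f i y - f i x <= G i * enorm (x - y).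
Proof.
have := hg i y x; rewrite /subgrad => sub_y.
have := ler_norm (- dotv (g i y) (x - y)); rewrite normrN => hN.
have := ler_wpM2r (enorm_ge0 (x - y)) (hG (hg i y)).
have := cauchy_schwarz (g i y) (x - y); lra.
Qed.

Lemma enorm_step_sqr i x z :
  enorm (x - eta *: g i x - z) ^+ 2 + 2 * eta * (f i x - f i z)
  <= enorm (x - z) ^+ 2 + eta ^+ 2 * G i ^+ 2.
Proof.
have -> : x - eta *: g i x - z = (x - z) + (- eta) *: g i x by rewrite scaleNr addrAC.
rewrite enormD_sqr enormZ normrN ger0_norm // dotvZr.
have sub_x : f i x - f i z <= dotv (g i x) (x - z).
  by have := hg i x z; rewrite /subgrad dotvBr dotvBr; lra.
have gG : enorm (g i x) ^+ 2 <= G i ^+ 2.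
  by rewrite ler_sqr ?nnegrE ?enorm_ge0 ?subgrad_bound_ge0 //; apply: hG.
have := ler_wpM2l eta_ge0 sub_x; have := ler_wpM2l (sqr_ge0 eta) gG.
rewrite (dotvC (x - z)) exprMn; lra.
Qed.

Lemma enorm_inner_pass_disp s x :
  enorm (x - inner_pass g eta s x) <= eta * \sum_(i <- s) G i.
Proof.
elim: s x => [|i s IH] x /=.
  by rewrite big_nil subrr mulr0 -(scale0r 0) enormZ normr0 mul0r.
set x' := x - eta *: g i x.
have -> : x - inner_pass g eta s x' = eta *: g i x + (x' - inner_pass g eta s x').
  by rewrite /x' addrA [eta *: _ + _]addrC subrK.
apply: le_trans (ler_enormD _ _) _.
rewrite big_cons mulrDr enormZ ger0_norm //.
exact: lerD (ler_wpM2l eta_ge0 (hG (hg i x))) (IH x').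
Qed.

(* [y] will be the proximal point that ends the epoch. *)
Lemma enorm_inner_pass_sqr s x y z M :
  eta * \sum_(i <- s) G i <= M ->
  let w := inner_pass g eta s x in
  enorm (w - z) ^+ 2 + 2 * eta * \sum_(i <- s) (f i y - f i z)
  <= enorm (x - z) ^+ 2 + eta ^+ 2 * \sum_(i <- s) G i ^+ 2
     + 2 * eta * \sum_(i <- s) G i * (enorm (w - y) + M).
Proof.
elim: s x => [|i s IH] x /=; first by rewrite !big_nil !mulr0 !addr0.
rewrite !big_cons => hM.
set x' := x - eta *: g i x; set w := inner_pass g eta s x'.
have hM' : eta * \sum_(j <- s) G j <= M.
  by apply: le_trans hM; rewrite ler_wpM2l // lerDr subgrad_bound_ge0.
have near_y : f i y - f i x <= G i * (enorm (w - y) + M).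
  apply: le_trans (subgrad_lipschitz i x y) _.
  rewrite ler_wpM2l ?subgrad_bound_ge0 //.
  have -> : x - y = (x - w) + (w - y) by rewrite addrA subrK.
  apply: le_trans (ler_enormD _ _) _; rewrite addrC lerD2l.
  by apply: le_trans hM; have := enorm_inner_pass_disp (i :: s) x; rewrite big_cons.
have := ler_wpM2l eta_ge0 near_y.
have := IH x' hM'; have := enorm_step_sqr i x z; rewrite /= -/x' -/w; lra.
Qed.

End IncrementalPass.

Lemma ge0_of_perturbed_ge0 (R : realFieldType) (a b : R) : 0 <= b ->
  (forall t, 0 < t < 1 -> 0 <= a + t * b) -> 0 <= a.
Proof.
move=> b_ge0 ha; apply/ler_addgt0Pr => e e_gt0.
have den_gt0 : 0 < b + 2 * e by lra.
set t := e / (b + 2 * e).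
have te : t * (b + 2 * e) = e by rewrite /t mulfVK ?gt_eqF.
have t_gt0 : 0 < t by rewrite divr_gt0.
have := ha t; rewrite t_gt0 /=; nra.
Qed.

Lemma fin_numP_lt (R : realType) (p : \bar R) :
  p != -oo%E -> (p < +oo)%E -> exists q, p = q%:E.
Proof. by case: p => [q| |] //; exists q. Qed.

Section Prox.
Variables (R : realType) (n d : nat).
Variable psi : 'rV[R]_d -> \bar R.
Hypothesis n_gt0 : (0 < n)%N.
Hypothesis psi_ninfty : forall x, psi x != -oo%E.
Hypothesis psi_convex : convex_efun psi.
Variables (eta : R) (v y : 'rV[R]_d).
Hypothesis eta_gt0 : 0 < eta.
Hypothesis y_prox : prox_min n psi eta v y.

Lemma prox_min_fin z pz : psi z = pz%:E -> exists py, psi y = py%:E.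
Proof.
move=> psi_z; apply: fin_numP_lt; first exact: psi_ninfty.
rewrite ltey; apply/eqP => psi_y.
have := y_prox z; rewrite psi_y psi_z.
have n_pos : (0 < n%:R :> R) by rewrite ltr0n.
by rewrite mulry gtr0_sg // mul1e addye // -EFinM -EFinD leye_eq.
Qed.

(* Compare y with the points [y + t (z - y)] of the segment, use convexity
   of psi, and let t go to 0. *)
Lemma prox_min_three_point z py pz : psi y = py%:E -> psi z = pz%:E ->
  enorm (z - y) ^+ 2 + enorm (y - v) ^+ 2 + 2 * eta * n%:R * py
  <= enorm (z - v) ^+ 2 + 2 * eta * n%:R * pz.
Proof.
move=> psi_y psi_z.
set nn : R := n%:R; set D := dotv (y - v) (z - y).
have nn_gt0 : 0 < nn by rewrite ltr0n.
suff key : 0 <= nn * (pz - py) + D / eta.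
  have -> : enorm (z - v) ^+ 2 = enorm (y - v) ^+ 2 + 2 * D + enorm (z - y) ^+ 2.
    by rewrite -enormD_sqr [_ + (z - y)]addrC addrA subrK.
  have two_eta_ge0 : 0 <= 2 * eta by rewrite mulr_ge0 // ltW.
  have := mulr_ge0 two_eta_ge0 key; rewrite mulrDr.
  have -> : 2 * eta * (D / eta) = 2 * D by field; rewrite gt_eqF.
  lra.
apply: (@ge0_of_perturbed_ge0 _ _ (enorm (z - y) ^+ 2 / (2 * eta))).
  by rewrite divr_ge0 ?sqr_ge0 // ltW // mulr_gt0.
move=> t /andP[t_gt0 t_lt1].
set zt := t *: z + (1 - t) *: y.
have := psi_convex z y (t := t); rewrite t_gt0 t_lt1 psi_y psi_z -!EFinM -EFinD.
move=> /(_ isT) psi_zt_le.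
have [q psi_zt] : exists q, psi zt = q%:E.
  apply: fin_numP_lt; first exact: psi_ninfty.
  by apply: le_lt_trans psi_zt_le _; rewrite ltry.
rewrite psi_zt lee_fin in psi_zt_le.
have zt_v : zt - v = (y - v) + t *: (z - y).
  by apply/rowP => i; rewrite !mxE; lra.
have := y_prox zt; rewrite psi_y psi_zt -!EFinM -!EFinD lee_fin zt_v (enormD_sqr (y - v)).
rewrite enormZ dotvZr (ger0_norm (ltW t_gt0)) -/D -/nn.
have := ler_wpM2l (ltW nn_gt0) psi_zt_le.
rewrite exprMn; set N := enorm (z - y) ^+ 2 => hq hprox.
rewrite -(pmulr_rge0 _ t_gt0).
have -> : D / eta = 2 * D * (1 / (2 * eta)) by field; rewrite gt_eqF.
have -> : N / (2 * eta) = N * (1 / (2 * eta)) by rewrite mul1r.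
set ie := 1 / (2 * eta) in hprox *.
lra.
Qed.

End Prox.

Lemma sum_sqr_le_sqr_sum (R : realDomainType) (I : Type) (r : seq I) (F : I -> R) :
  (forall i, 0 <= F i) -> \sum_(i <- r) F i ^+ 2 <= (\sum_(i <- r) F i) ^+ 2.
Proof.
move=> F_ge0; elim: r => [|i r IH]; first by rewrite !big_nil expr0n.
have := F_ge0 i; have : 0 <= \sum_(j <- r) F j by apply: sumr_ge0.
rewrite !big_cons; nra.
Qed.

Lemma Fobj_le_finE (R : realType) (n d : nat) (f : 'I_n -> 'rV[R]_d -> R)
    (psi : 'rV[R]_d -> \bar R) y z py pz :
  (0 < n)%N -> psi y = py%:E -> psi z = pz%:E ->
  (Fobj f psi z <= Fobj f psi y)%E ->
  \sum_i f i z + n%:R * pz <= \sum_i f i y + n%:R * py.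
Proof.
move=> n_gt0 psi_y psi_z; rewrite /Fobj psi_y psi_z -!EFinD lee_fin.
have n_pos : 0 < n%:R :> R by rewrite ltr0n.
by move/(ler_wpM2l (ltW n_pos)); rewrite !mulrDr !mulrA mulfV ?gt_eqF // !mul1r.
Qed.

Section Epoch.
Variables (R : realType) (n d : nat).
Variables (f : 'I_n -> 'rV[R]_d -> R) (psi : 'rV[R]_d -> \bar R).
Variables (g : 'I_n -> 'rV[R]_d -> 'rV[R]_d) (G : 'I_n -> R).
Hypothesis n_gt0 : (0 < n)%N.
Hypothesis psi_ninfty : forall x, psi x != -oo%E.
Hypothesis psi_convex : convex_efun psi.
Hypothesis hg : forall i x, subgrad (f i) x (g i x).
Hypothesis hG : forall i x v, subgrad (f i) x v -> enorm v <= G i.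

(* Comparing the pass iterates with [y] costs [2 eta S (|v - y| + eta S)];
   Young's inequality absorbs the [|v - y|] part into the [|y - v|^2] gained
   from the prox step. *)
Lemma enorm_epoch_sqr (s : seq 'I_n) eta x y z py pz :
  perm_eq s (enum 'I_n) -> 0 < eta ->
  prox_min n psi eta (inner_pass g eta s x) y ->
  psi y = py%:E -> psi z = pz%:E -> (Fobj f psi z <= Fobj f psi y)%E ->
  enorm (y - z) ^+ 2 <= enorm (x - z) ^+ 2 + 4 * eta ^+ 2 * (\sum_i G i) ^+ 2.
Proof.
move=> s_perm eta_gt0 y_prox psi_y psi_z z_opt.
set S := \sum_i G i; set v := inner_pass g eta s x.
have sum_s (F : 'I_n -> R) : \sum_(i <- s) F i = \sum_i F i.
  by rewrite (perm_big _ s_perm) big_enum.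
have pass := enorm_inner_pass_sqr hg hG (ltW eta_gt0) (s := s) x y z (M := eta * S).
rewrite /= !sum_s -/v -/S sumrB -mulr_suml -/S in pass.
have {}pass := pass (lexx _).
have prox := prox_min_three_point n_gt0 psi_ninfty psi_convex eta_gt0 y_prox psi_y psi_z.
have two_eta_ge0 : 0 <= 2 * eta by lra.
have opt := ler_wpM2l two_eta_ge0 (Fobj_le_finE n_gt0 psi_y psi_z z_opt).
have sumG2 : \sum_i G i ^+ 2 <= S ^+ 2.
  by apply: sum_sqr_le_sqr_sum => i; apply: subgrad_bound_ge0 hg hG i.
have young := sqr_ge0 (eta * S - enorm (v - y)).
have := ler_wpM2l (sqr_ge0 eta) sumG2.
rewrite -/v (enorm_distC z) (enorm_distC y v) (enorm_distC z v) in prox.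
nra.
Qed.

End Epoch.

Lemma psum_le_nneseries (R : realType) (a : nat -> R) (b : R) m k :
  (forall l, 0 <= a l) -> (\sum_(m <= l <oo) (a l)%:E <= b%:E)%E ->
  \sum_(m <= l < k) a l <= b.
Proof.
move=> a_ge0 sum_le; rewrite -lee_fin; apply: le_trans sum_le.
rewrite -sumEFin; apply: (@nneseries_lim_ge _ _ xpredT) => l _ _.
by rewrite lee_fin.
Qed.

Lemma ler_telescope (R : realDomainType) (u a w : nat -> R) :
  (forall k, 0 <= a k) -> (forall k, w k <= w k.+1) ->
  (forall k, (0 < k)%N -> u k.+1 <= u k + a k * w k) ->
  forall k, u k.+1 <= u 1%N + w k * \sum_(1 <= l < k.+1) a l.
Proof.
move=> a_ge0 w_le u_step; elim=> [|k IH]; first by rewrite big_geq // mulr0 addr0.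
rewrite big_nat_recr //=.
have : 0 <= \sum_(1 <= l < k.+1) a l by apply: sumr_ge0.
have := ler_wpM2r (a_ge0 k.+1) (w_le k).
have := u_step k.+1 isT; have := w_le k; nra.
Qed.

Lemma ler_add_of_sqr (R : realDomainType) (a b e : R) :
  0 <= a -> 0 <= b -> 0 <= e -> e ^+ 2 <= a ^+ 2 + b ^+ 2 -> e <= a + b.
Proof.
move=> a0 b0 e0 h; rewrite -ler_sqr ?nnegrE ?addr_ge0 // sqrrD.
have := mulr_ge0 a0 b0; lra.
Qed.

Section RunningMax.
Variables (R : realType) (d : nat) (x : nat -> 'rV[R]_d) (r : R).

Lemma rk_ge k : r <= rk x r k.
Proof. exact: bigmax_ge_id. Qed.

Lemma rk_le_succ k : rk x r k <= rk x r k.+1.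
Proof. exact: le_bigmax_nat. Qed.

(* The bound [B] is stable, [A + c max(r, B) <= B], so it propagates along
   the running maximum. *)
Lemma enorm_le_of_rk_step (A c : R) :
  0 <= A -> 0 <= r -> 0 <= c < 1 ->
  (forall k, enorm (x k.+1 - x 1%N) <= A + c * rk x r k) ->
  forall k, (0 < k)%N -> enorm (x k - x 1%N) <= A / (1 - c) + c / (1 - c) * r.
Proof.
move=> A_ge0 r_ge0 /andP[c_ge0 c_lt1] step.
have c1_gt0 : 0 < 1 - c by lra.
set B := A / (1 - c) + c / (1 - c) * r.
have B_fix : A + c * Num.max r B <= B.
  have eB : B * (1 - c) = A + c * r by rewrite /B; field; rewrite gt_eqF.
  have B_ge0 : 0 <= B.
    by rewrite -(pmulr_lge0 _ c1_gt0) eB addr_ge0 // mulr_ge0.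
  have [rB|Br] := leP r B; last by have := mulr_ge0 c_ge0 B_ge0; nra.
  by have := mulr_ge0 c_ge0 r_ge0; nra.
suff bound k : forall l, (0 < l <= k)%N -> enorm (x l - x 1%N) <= B.
  by move=> k k_gt0; apply: (bound k); rewrite k_gt0 leqnn.
elim: k => [l /andP[l_gt0 l_le0]|k IH l]; first by case: l l_gt0 l_le0.
move=> /andP[l_gt0]; rewrite leq_eqVlt ltnS => /orP[/eqP->|l_le]; last by apply: IH; rewrite l_gt0.
apply: le_trans (step k) (le_trans _ B_fix).
rewrite lerD2l ler_wpM2l // /rk big_seq_cond; apply: bigmax_le => [|l' /andP[]].
  by rewrite le_max lexx.
rewrite mem_index_iota ltnS => l'_range _; rewrite le_max IH ?orbT //.
Qed.

End RunningMax.

Lemma perm_eq_map_enum (T : finType) (s : {perm T}) :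
  perm_eq [seq s j | j <- enum T] (enum T).
Proof.
apply: uniq_perm; [by rewrite (map_inj_uniq (@perm_inj _ s)) enum_uniq | exact: enum_uniq |].
move=> i; rewrite mem_enum; apply/mapP; exists ((s^-1)%g i); rewrite ?mem_enum ?permKV //.
Qed.

Theorem mainTheorem12 (R : realType) (n d : nat) (hn : (0 < n)%N)
  (f : 'I_n -> 'rV[R]_d -> R) (hf : forall i, convex_fun (f i))
  (psi : 'rV[R]_d -> \bar R)
  (hpsi_p : proper_fun psi) (hpsi_c : closed_fun psi) (hpsi_v : convex_efun psi)
  (g : 'I_n -> 'rV[R]_d -> 'rV[R]_d)
  (hg : forall i x, subgrad (f i) x (g i x))
  (G : 'I_n -> R) (hGpos : forall i, 0 < G i)
  (hGlip : forall i x v, subgrad (f i) x v -> enorm v <= G i)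
  (xstar : 'rV[R]_d) (hstar_fin : (psi xstar < +oo)%E)
  (hstar : forall x, (Fobj f psi xstar <= Fobj f psi x)%E)
  (x : nat -> 'rV[R]_d) (hx1 : (psi (x 1%N) < +oo)%E)
  (sigma : nat -> {perm 'I_n}) (eta : nat -> R)
  (hstep : forall k, (0 < k)%N ->
     prox_min n psi (eta k)
       (inner_pass g (eta k) [seq sigma k j | j <- enum 'I_n] (x k)) (x k.+1))
  (r : R) (hr : 0 < r) (etat : nat -> R)
  (hetat : forall k, (0 < k)%N -> 0 < etat k)
  (heta : forall k, (0 < k)%N -> eta k = rk x r k * etat k)
  (c : R) (hc0 : 0 < c) (hc1 : c < 1)
  (hsum : (\sum_(1 <= k <oo)
            ((6 * ((\sum_(i < n) G i) / n%:R) ^+ 2 * (n%:R) ^+ 2 * etat k ^+ 2)%:E)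
           <= (c ^+ 2)%:E)%E) :
  forall k, (0 < k)%N ->
    enorm (x k - x 1%N) <= 2 / (1 - c) * enorm (xstar - x 1%N) + c / (1 - c) * r.
Proof.
have psi_ninfty z : psi z != -oo%E by case: hpsi_p.
have [pstar psi_star] := fin_numP_lt (psi_ninfty xstar) hstar_fin.
have psi_fin k : (0 < k)%N -> exists p, psi (x k) = p%:E.
  case: k => [//|[_|k _]]; first exact: fin_numP_lt.
  exact: (prox_min_fin hn psi_ninfty (hstep k.+1 isT) psi_star).
have rk_ge0 k : 0 <= rk x r k by apply: le_trans (ltW hr) (rk_ge x r k).
set S := \sum_i G i; set D := enorm (xstar - x 1%N).
pose a k := 6 * (S / n%:R) ^+ 2 * n%:R ^+ 2 * etat k ^+ 2.
have a_ge0 k : 0 <= a k.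
  by rewrite /a; apply: mulr_ge0 (sqr_ge0 _); rewrite mulr_ge0 ?sqr_ge0 // mulr_ge0 ?sqr_ge0.
have dist_step k : (0 < k)%N ->
    enorm (x k.+1 - xstar) ^+ 2 <= enorm (x k - xstar) ^+ 2 + a k * rk x r k ^+ 2.
  move=> k_gt0; have [py psi_y] := psi_fin k.+1 isT.
  have eta_gt0 : 0 < eta k by rewrite heta // mulr_gt0 ?hetat // (lt_le_trans hr (rk_ge x r k)).
  apply: le_trans (enorm_epoch_sqr hn psi_ninfty hpsi_v hg hGlip (perm_eq_map_enum _)
    eta_gt0 (hstep k k_gt0) psi_y psi_star (hstar _)) _.
  rewrite lerD2l -/S heta // /a -(mulrA 6) -exprMn mulfVK ?pnatr_eq0 -?lt0n //.
  by have := sqr_ge0 (rk x r k * etat k * S); rewrite !exprMn; lra.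
have rk_sqr_le k : rk x r k ^+ 2 <= rk x r k.+1 ^+ 2.
  by rewrite ler_sqr ?nnegrE ?rk_le_succ.
have dist_1 := ler_telescope (u := fun k => enorm (x k - xstar) ^+ 2) a_ge0 rk_sqr_le dist_step.
have step k : enorm (x k.+1 - x 1%N) <= 2 * D + c * rk x r k.
  have to_star : enorm (x k.+1 - xstar) <= D + c * rk x r k.
    apply: ler_add_of_sqr (mulr_ge0 (ltW hc0) (rk_ge0 k)) (enorm_ge0 _) _.
      exact: enorm_ge0.
    apply: le_trans (dist_1 k) _.
    rewrite enorm_distC -/D lerD2l exprMn mulrC ler_wpM2r ?sqr_ge0 //.
    exact: psum_le_nneseries a_ge0 hsum.
  have -> : x k.+1 - x 1%N = (x k.+1 - xstar) + (xstar - x 1%N) by rewrite addrA subrK.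
  by apply: le_trans (ler_enormD _ _) _; rewrite -/D; lra.
move=> k k_gt0; rewrite -mulrAC.
apply: enorm_le_of_rk_step step k k_gt0; first exact: mulr_ge0 (enorm_ge0 _).
  exact: ltW.
by rewrite (ltW hc0) hc1.
Qed.
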